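(* Let $A=(A_j)_{j=0}^{d-1}$ be an injective MPS tensor of bond dimension $D$ in left canonical form, let $u$ be a $d\times d$ unitary matrix, and let $\mathbb{E}_u=\sum_{j,k=0}^{d-1} u_{jk}\, A_k\otimes \overline{A_j}$. Then $\mathbb{E}_u$ has an eigenvalue of modulus $1$ if and only if there exist a unitary $D\times D$ matrix $v$ and an angle $\theta$ such that for all $j\in\{0,\dots,d-1\}$, $$\sum_{k=0}^{d-1}u_{jk}A_k = e^{i\theta}\, v A_j v^\dagger .$$
   Context: An MPS tensor of physical dimension $d$ and bond dimension $D$ is a collection of complex $D\times D$ matrices $A_0,\dots,A_{d-1}$. It is in left canonical form if $\sum_{j=0}^{d-1}A_j^\dagger A_j=\mathbb{1}_{D}$. Its transfer matrix is $\mathbb{E}=\sum_{j}A_j\otimes\overline{A_j}$. The tensor (in left canonical form) is called injective if $1$ is a non-degenerate eigenvalue of the transfer matrix whose left eigenvector is the identity $\mathbb{1}_D$ (unique up to scaling, i.e. the only solution of $\sum_jA_j^\dagger XA_j=X$ is $X\propto\mathbb{1}$), all other eigenvalues of $\mathbb{E}$ have modulus strictly less than $1$, and there is a unique, full-rank density matrix $\rho$ with $\sum_j A_j\rho A_j^\dagger=\rho$. (All eigenvalues of $\mathbb{E}_u$ have modulus at most $1$.) *)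

From HB Require Import structures.
From mathcomp Require Import all_boot all_order all_algebra.
From mathcomp Require Import complex mxtens.
From mathcomp Require Import reals trigo.

Set Implicit Arguments.
Unset Strict Implicit.
Unset Printing Implicit Defensive.

Import Order.TTheory GRing.Theory Num.Theory.
Local Open Scope ring_scope.
Local Open Scope complex_scope.

Section MPS.
Variable R : realType.
Local Notation C := R[i].

Definition dagger m n (M : 'M[C]_(m, n)) : 'M[C]_(n, m) := (map_mx Num.conj M)^T.

Definition conjmxC m n (M : 'M[C]_(m, n)) : 'M[C]_(m, n) := map_mx Num.conj M.

Definition expi (theta : R) : C := (cos theta) +i* (sin theta).

Definition unitary n (U : 'M[C]_n) : Prop := U *m dagger U = 1%:M.

Definition left_canonical d D (A : 'I_d -> 'M[C]_D) : Prop :=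
  \sum_(j < d) dagger (A j) *m A j = 1%:M.

Definition transfer d D (A : 'I_d -> 'M[C]_D) : 'M[C]_(D * D) :=
  \sum_(j < d) tensmx (A j) (conjmxC (A j)).

Definition transfer_u d D (A : 'I_d -> 'M[C]_D) (u : 'M[C]_d) : 'M[C]_(D * D) :=
  \sum_(j < d) \sum_(k < d) u j k *: tensmx (A k) (conjmxC (A j)).

Definition psd n (M : 'M[C]_n) : Prop :=
  dagger M = M /\ forall x : 'rV[C]_n, 0 <= (x *m M *m dagger x) 0 0.

Definition density n (M : 'M[C]_n) : Prop := psd M /\ \tr M = 1.

Definition injective_mps d D (A : 'I_d -> 'M[C]_D) : Prop :=
  [/\ eigenvalue (transfer A) 1,
      (* 1 non-degenerate, left fixed points are multiples of the identity *)
      (forall X : 'M[C]_D, \sum_(j < d) dagger (A j) *m X *m A j = X ->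
         exists c : C, X = c%:M),
      (forall l : C, eigenvalue (transfer A) l -> l != 1 -> `|l| < 1) &
      exists rho : 'M[C]_D,
        [/\ density rho, rho \in unitmx,
            \sum_(j < d) A j *m rho *m dagger (A j) = rho &
            forall rho' : 'M[C]_D, density rho' ->
              \sum_(j < d) A j *m rho' *m dagger (A j) = rho' -> rho' = rho]].

End MPS.

From HB Require Import structures.
From mathcomp Require Import all_boot all_order all_algebra.
From mathcomp Require Import complex mxtens.
From mathcomp Require Import reals trigo.
From mathcomp Require Import ring lra.

(* Put B_j := sum_k u_jk A_k, so that E_u = sum_j B_j (x) conj(A_j), and B is
   again left canonical.  Through a row-major vectorization, l is an eigenvalue
   of sum_j P_j (x) conj(Q_j) iff sum_j P_j† X Q_j = conj(l) X for some X <> 0.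

   If B_j = e v A_j v† with v unitary, then v X is such an X for e whenever
   sum_j A_j† X A_j = X, which the eigenvalue 1 of the transfer matrix
   provides.

   Conversely, let |l| = 1 with X as above and let rho be the full-rank fixed
   point.  For K_j := X A_j - conj(l) B_j X, the fixed-point equation of rho,
   the left canonical form of B and the eigen-equation give
   sum_j tr(K_j rho K_j†) = (1 - |l|^2) tr(X rho X†) = 0, so all K_j vanish
   because rho is positive definite.  Hence X† X is a fixed point of
   Y |-> sum_j A_j† Y A_j, so by injectivity it is c 1 with c > 0, and
   v := X / sqrt c is a unitary with B_j = l v A_j v†. *)

Set Implicit Arguments.
Unset Strict Implicit.
Unset Printing Implicit Defensive.
Import Order.TTheory GRing.Theory Num.Theory.
Local Open Scope ring_scope.

Lemma sum_mxtens_index (V : nmodType) m n (F : 'I_(m * n) -> V) :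
  \sum_(k < m * n) F k = \sum_(i < m) \sum_(j < n) F (mxtens_index (i, j)).
Proof.
rewrite pair_big /=; apply: (reindex (fun p => mxtens_index (p.1, p.2))).
exists (@mxtens_unindex m n) => [[i j] _|k _]; first by rewrite mxtens_indexK.
by rewrite -surjective_pairing mxtens_unindexK.
Qed.

Section TensorVectorization.
Variables (K : comNzRingType) (m n : nat).

(* Unlike [mxvec], indexed through [mxtens_index], to match [tensmx]. *)
Definition mxtvec (M : 'M[K]_(m, n)) : 'rV[K]_(m * n) :=
  \row_k M (@mxtens_unindex m n k).1 (@mxtens_unindex m n k).2.

Definition tvec_mx (x : 'rV[K]_(m * n)) : 'M[K]_(m, n) :=
  \matrix_(i, j) x 0 (mxtens_index (i, j)).

Lemma mxtvecK : cancel mxtvec tvec_mx.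
Proof. by move=> M; apply/matrixP => i j; rewrite !mxE mxtens_indexK. Qed.

Lemma tvec_mxK : cancel tvec_mx mxtvec.
Proof.
by move=> x; apply/rowP => k; rewrite !mxE -surjective_pairing mxtens_unindexK.
Qed.

Lemma mxtvec_is_linear : linear mxtvec.
Proof. by move=> a M N; apply/rowP => k; rewrite !mxE. Qed.

HB.instance Definition _ :=
  GRing.isLinear.Build K 'M[K]_(m, n) 'rV[K]_(m * n) _ mxtvec mxtvec_is_linear.

Lemma mxtvec_eq0 (M : 'M[K]_(m, n)) : (mxtvec M == 0) = (M == 0).
Proof. by rewrite -(inj_eq (can_inj mxtvecK)) linear0. Qed.

End TensorVectorization.

Lemma mul_mxtvec_tens (K : comNzRingType) m n p q
    (M : 'M[K]_(m, n)) (P : 'M[K]_(m, p)) (Q : 'M[K]_(n, q)) :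
  mxtvec M *m (P *t Q) = mxtvec (P^T *m M *m Q).
Proof.
apply/rowP => k; case: (mxtens_indexP k) => j l.
rewrite !mxE sum_mxtens_index mxtens_indexK /=.
under eq_bigr do under eq_bigr do rewrite !mxE !mxtens_indexK /=.
rewrite exchange_big /=; apply: eq_bigr => k' _.
rewrite !mxE mulr_suml; apply: eq_bigr => i _.
by rewrite !mxE mulrA [M i k' * _]mulrC.
Qed.

Lemma tensmx_sumZl (K : comNzRingType) m n p q I (r : seq I) (c : I -> K)
    (F : I -> 'M[K]_(m, n)) (Y : 'M[K]_(p, q)) :
  (\sum_(i <- r) c i *: F i) *t Y = \sum_(i <- r) c i *: (F i *t Y).
Proof.
apply/matrixP => i j; rewrite !mxE !summxE mulr_suml; apply: eq_bigr => k _.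
by rewrite !mxE mulrA.
Qed.

Section Adjoint.
Variable R : realType.
Local Notation C := R[i].

Lemma dagger_is_zmod_morphism m n : zmod_morphism (@dagger R m n).
Proof. by move=> A B; rewrite /dagger raddfB /= linearB. Qed.

HB.instance Definition _ m n := GRing.isZmodMorphism.Build 'M[C]_(m, n)
  'M[C]_(n, m) (@dagger R m n) (@dagger_is_zmod_morphism m n).

Lemma daggerM m n p (A : 'M[C]_(m, n)) (B : 'M[C]_(n, p)) :
  dagger (A *m B) = dagger B *m dagger A.
Proof. by rewrite /dagger map_mxM trmx_mul. Qed.

Lemma daggerZ m n c (A : 'M[C]_(m, n)) : dagger (c *: A) = c^* *: dagger A.
Proof. by rewrite /dagger map_mxZ linearZ. Qed.

Lemma daggerK m n (A : 'M[C]_(m, n)) : dagger (dagger A) = A.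
Proof. by apply/matrixP => i j; rewrite !mxE conjCK. Qed.

Lemma dagger1 n : dagger (1%:M : 'M[C]_n) = 1%:M.
Proof. by rewrite /dagger map_mx1 trmx1. Qed.

Lemma mxtrace_dagger n (M : 'M[C]_n) : \tr (dagger M) = (\tr M)^*.
Proof.
by rewrite /dagger mxtrace_tr rmorph_sum; apply: eq_bigr => i _; rewrite mxE.
Qed.

Lemma conjmxCK m n : involutive (@conjmxC R m n).
Proof. by move=> A; apply/matrixP => i j; rewrite !mxE conjCK. Qed.

Lemma conjmxC_dagger m n (A : 'M[C]_(m, n)) : conjmxC (dagger A) = A^T.
Proof. by apply/matrixP => i j; rewrite !mxE conjCK. Qed.

End Adjoint.

Section KrausEigenvalue.
Variables (R : realType) (d D : nat).
Local Notation C := R[i].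

Lemma eigenvalue_sum_tens_conj (P Q : 'I_d -> 'M[C]_D) l :
  eigenvalue (\sum_j P j *t conjmxC (Q j)) l <->
  exists2 X : 'M[C]_D, X != 0 & \sum_j dagger (P j) *m X *m Q j = l^* *: X.
Proof.
have vecE X : mxtvec (conjmxC X) *m (\sum_j P j *t conjmxC (Q j)) =
              mxtvec (conjmxC (\sum_j dagger (P j) *m X *m Q j)).
  rewrite mulmx_sumr /conjmxC raddf_sum linear_sum /=; apply: eq_bigr => j _.
  by rewrite mul_mxtvec_tens !map_mxM -[(P j)^T]conjmxC_dagger.
have conjmxCZ c X : conjmxC (c *: X) = c^* *: conjmxC X by exact: map_mxZ.
split.
- case/eigenvalueP => x xT x0; exists (conjmxC (tvec_mx x)).
    apply: contraNneq x0 => X0.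
    by rewrite -[x]tvec_mxK -[tvec_mx x]conjmxCK X0 /conjmxC raddf0 linear0.
  apply: (can_inj (@conjmxCK R D D)); apply: (can_inj (@mxtvecK _ D D)).
  rewrite -vecE !conjmxCK (tvec_mxK x) xT conjmxCZ conjmxCK conjCK.
  by rewrite linearZ /= (tvec_mxK x).
- case=> X X0 PXQ; apply/eigenvalueP; exists (mxtvec (conjmxC X)).
    by rewrite vecE PXQ conjmxCZ conjCK linearZ.
  by rewrite mxtvec_eq0 /conjmxC map_mx_eq0.
Qed.

End KrausEigenvalue.

Section Positivity.
Variable R : realType.
Local Notation C := R[i].

Lemma rV_dagger_ge0 n (x : 'rV[C]_n) : 0 <= (x *m dagger x) 0 0.
Proof. by rewrite mxE; apply: sumr_ge0 => k _; rewrite !mxE mul_conjC_ge0. Qed.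

Lemma rV_dagger_eq0 n (x : 'rV[C]_n) : ((x *m dagger x) 0 0 == 0) = (x == 0).
Proof.
apply/eqP/eqP => [|->]; last by rewrite mul0mx mxE.
have x_ge0 k : 0 <= x 0 k * dagger x k 0 by rewrite !mxE mul_conjC_ge0.
rewrite mxE => /(psumr_eq0P (fun k _ => x_ge0 k)) x0.
apply/rowP => k; apply/eqP; rewrite mxE -mul_conjC_eq0.
by have := x0 k isT; rewrite !mxE => ->.
Qed.

Lemma psd1 n : psd (1%:M : 'M[C]_n).
Proof. by split=> [|x]; rewrite ?dagger1 ?mulmx1 ?rV_dagger_ge0. Qed.

Lemma mxtrace_form_rows m n (K : 'M[C]_(m, n)) (rho : 'M[C]_n) :
  \tr (K *m rho *m dagger K) = \sum_i (row i K *m rho *m dagger (row i K)) 0 0.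
Proof.
apply: eq_bigr => i _; rewrite -row_mul !mxE; apply: eq_bigr => k _.
by rewrite !mxE.
Qed.

Lemma psd_mxtrace_ge0 m n (K : 'M[C]_(m, n)) (rho : 'M[C]_n) :
  psd rho -> 0 <= \tr (K *m rho *m dagger K).
Proof. by case=> _ rho_ge0; rewrite mxtrace_form_rows sumr_ge0. Qed.

Lemma mxtrace_dagger_ge0 m n (K : 'M[C]_(m, n)) : 0 <= \tr (K *m dagger K).
Proof. by have := psd_mxtrace_ge0 K (psd1 n); rewrite mulmx1. Qed.

Lemma mxtrace_dagger_eq0 m n (K : 'M[C]_(m, n)) :
  (\tr (K *m dagger K) == 0) = (K == 0).
Proof.
apply/eqP/eqP => [|->]; last by rewrite mul0mx mxtrace0.
rewrite -[X in X *m _]mulmx1 mxtrace_form_rows; under eq_bigr do rewrite mulmx1.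
move/(psumr_eq0P (fun i _ => rV_dagger_ge0 (row i K))) => K0.
by apply/row_matrixP => i; apply/eqP; rewrite row0 -rV_dagger_eq0 K0.
Qed.

Lemma pd_mxtrace_eq0 m n (K : 'M[C]_(m, n)) (rho : 'M[C]_n) :
  psd rho -> rho \in unitmx -> \tr (K *m rho *m dagger K) = 0 -> K = 0.
Proof.
move=> psd_rho rho_unit trK0; have [rhoH _] := psd_rho.
set Y := K *m rho.
have dY : dagger Y = rho *m dagger K by rewrite daggerM rhoH.
set a := \tr (Y *m dagger Y); set b := \tr (Y *m rho *m dagger Y).
have a_ge0 : 0 <= a := mxtrace_dagger_ge0 Y.
have b_ge0 : 0 <= b := psd_mxtrace_ge0 Y psd_rho.
have b1_gt0 : 0 < b + 1 := ltr_wpDl b_ge0 ltr01.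
(* On the real line K + t Y the form is 2 t a + t^2 b; this t makes it
   negative unless a = 0. *)
pose t := - (a / (b + 1)).
have t_real : t^* = t.
  apply: conj_Creal; rewrite /t rpredN; apply: rpredM; apply: ger0_real => //.
  by rewrite invr_ge0 ltW.
have := psd_mxtrace_ge0 (K + t *: Y) psd_rho.
have -> : \tr ((K + t *: Y) *m rho *m dagger (K + t *: Y)) =
          - (a ^+ 2 * (b + 2%:R)) / (b + 1) ^+ 2.
  rewrite [dagger _]raddfD /= daggerZ t_real !mulmxDl !mulmxDr.
  rewrite -!scalemxAl -!scalemxAr !raddfD /= !mxtraceZ trK0 -/Y.
  rewrite -[Y *m rho *m dagger K]mulmxA -dY -/a -/b /t.
  by field; rewrite gt_eqF.
rewrite pmulr_lge0 ?invr_gt0 ?exprn_gt0 // oppr_ge0 => a2b_le0.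
have : a ^+ 2 * (b + 2%:R) == 0.
  by rewrite eq_le a2b_le0 mulr_ge0 ?exprn_ge0 ?addr_ge0.
rewrite mulf_eq0 expf_eq0 /= (gt_eqF (ltr_wpDl b_ge0 _)) ?ltr0n // orbF.
rewrite mxtrace_dagger_eq0 => /eqP Y0.
by rewrite -[K]mulmx1 -(mulmxV rho_unit) mulmxA -/Y Y0 mul0mx.
Qed.

End Positivity.

Section Intertwining.
Variable R : realType.
Local Notation C := R[i].
Variables (d D : nat) (A B : 'I_d -> 'M[C]_D) (rho : 'M[C]_D).
Local Notation "<< P , Q >>" := (\tr (P *m rho *m dagger Q)).

Hypothesis psd_rho : psd rho.

Lemma form_conj (P Q : 'M[C]_D) : << Q, P >> = (<< P, Q >>)^*.
Proof. by rewrite -mxtrace_dagger !daggerM daggerK psd_rho.1 !mulmxA. Qed.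

Lemma form_subZ (P Q : 'M[C]_D) mu :
  << P - mu *: Q, P - mu *: Q >> =
  << P, P >> - mu^* * << P, Q >> - mu * << Q, P >> + mu * mu^* * << Q, Q >>.
Proof.
rewrite [dagger _]raddfB /= daggerZ !(mulmxBl, mulmxBr) -!scalemxAl -!scalemxAr.
rewrite !raddfB /= !mxtraceZ.
set pp := << P, P >>; set pq := << P, Q >>; set qp := << Q, P >>.
set qq := << Q, Q >>; ring.
Qed.

Lemma sum_form_adjoint (X Y : 'M[C]_D) :
  \sum_j << Y *m A j, B j *m X >> = << \sum_j dagger (B j) *m Y *m A j, X >>.
Proof.
rewrite !mulmx_suml raddf_sum; apply: eq_bigr => j _.
by rewrite daggerM !mulmxA mxtrace_mulC !mulmxA.
Qed.

Hypothesis rho_fixed : \sum_j A j *m rho *m dagger (A j) = rho.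

Lemma sum_form_fixed (X Y : 'M[C]_D) :
  \sum_j << X *m A j, Y *m A j >> = << X, Y >>.
Proof.
rewrite -[in RHS]rho_fixed mulmx_sumr mulmx_suml raddf_sum.
by apply: eq_bigr => j _; rewrite daggerM !mulmxA.
Qed.

Hypothesis B_canonical : left_canonical B.

Lemma sum_form_canonical (X Y : 'M[C]_D) :
  \sum_j << B j *m X, B j *m Y >> = << X, Y >>.
Proof.
rewrite -[X in << X, _ >>]mul1mx -B_canonical !mulmx_suml raddf_sum.
by apply: eq_bigr => j _; rewrite daggerM !mulmxA mxtrace_mulC !mulmxA.
Qed.

Hypothesis rho_unit : rho \in unitmx.

Lemma unimodular_eigen_intertwines (X : 'M[C]_D) mu :
  mu * mu^* = 1 -> \sum_j dagger (B j) *m X *m A j = mu *: X ->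
  forall j, X *m A j = mu *: (B j *m X).
Proof.
move=> mu1 eigX; set t := << X, X >>.
have t_real : t^* = t by apply/conj_Creal/ger0_real/psd_mxtrace_ge0.
pose K j := X *m A j - mu *: (B j *m X).
have K_form j : << K j, K j >> = << X *m A j, X *m A j >>
    - mu^* * << X *m A j, B j *m X >> - mu * (<< X *m A j, B j *m X >>)^*
    + mu * mu^* * << B j *m X, B j *m X >>.
  by rewrite -form_conj form_subZ.
have : \sum_j << K j, K j >> = 0.
  under eq_bigr do rewrite K_form.
  rewrite !big_split /= !sumrN -!mulr_sumr -rmorph_sum.
  rewrite sum_form_fixed sum_form_canonical sum_form_adjoint eigX.
  rewrite -!scalemxAl mxtraceZ -/t rmorphM /= t_real.
  transitivity ((1 - mu * mu^*) * t); first by ring.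
  by rewrite mu1 subrr mul0r.
move/(psumr_eq0P (fun j _ => psd_mxtrace_ge0 (K j) psd_rho)) => K0 j.
by apply/eqP; rewrite -subr_eq0; apply/eqP/(pd_mxtrace_eq0 psd_rho rho_unit)/K0.
Qed.

End Intertwining.

Section Unitary.
Variable R : realType.
Local Notation C := R[i].

Lemma scalar_gram_unitary n (X : 'M[C]_n) c :
  X != 0 -> dagger X *m X = c%:M -> exists2 s : C, s != 0 & unitary (s^-1 *: X).
Proof.
move=> X0 XX.
have c_gt0 : 0 < c.
  have : 0 < \tr (X *m dagger X).
    by rewrite lt_def mxtrace_dagger_eq0 X0 mxtrace_dagger_ge0.
  rewrite mxtrace_mulC XX mxtrace_scalar.
  by case: n {X X0 XX} => [|n]; rewrite ?mulr0n ?ltxx // pmulrn_lgt0.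
have s_gt0 : 0 < sqrtC c by rewrite sqrtC_gt0.
exists (sqrtC c); first by rewrite gt_eqF.
apply: mulmx1C.
rewrite daggerZ -scalemxAl -scalemxAr XX scalerA scale_scalar_mx.
rewrite conj_Creal ?rpredV ?gtr0_real // -invrM ?unitfE ?gt_eqF //.
by rewrite -expr2 sqrtCK mulVf ?gt_eqF.
Qed.

Lemma left_canonical_mix d D (A : 'I_d -> 'M[C]_D) (u : 'M[C]_d) :
  left_canonical A -> unitary u ->
  left_canonical (fun j => \sum_k u j k *: A k).
Proof.
rewrite /left_canonical => <- /mulmx1C uu.
transitivity (\sum_k \sum_l (dagger u *m u) k l *: (dagger (A k) *m A l)).
  under eq_bigr do rewrite [dagger _]raddf_sum /= mulmx_suml.
  rewrite exchange_big; apply: eq_bigr => k _ /=.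
  under eq_bigr do rewrite mulmx_sumr.
  rewrite exchange_big; apply: eq_bigr => l _ /=.
  rewrite mxE scaler_suml; apply: eq_bigr => j _.
  by rewrite daggerZ -scalemxAl -scalemxAr scalerA !mxE.
apply: eq_bigr => k _; rewrite uu (bigD1 k) //= big1 ?addr0 => [|l lk].
  by rewrite mxE eqxx scale1r.
by rewrite mxE eq_sym (negPf lk) scale0r.
Qed.

End Unitary.

Section Expi.
Variable R : realType.

Lemma norm_expi (t : R) : `|expi t| = 1.
Proof. by rewrite /expi normc_def /= cos2Dsin2 sqrtr1. Qed.

Lemma unimodular_expi (z : R[i]) : `|z| = 1 -> exists t : R, expi t = z.
Proof.
case: z => a b; rewrite normc_def /= => -[ab1].
have {}ab1 : a ^+ 2 + b ^+ 2 = 1.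
  by rewrite -[LHS]sqr_sqrtr ?addr_ge0 ?sqr_ge0 // ab1 expr1n.
have a_bound : -1 <= a <= 1 by apply/andP; split; nra.
have [_ cos_acos] := acos_def a_bound.
have sin_acos : sin (acos a) = `|b|.
  by rewrite sin_acos // -sqrtr_sqr; congr Num.sqrt; lra.
have [b_ge0|b_lt0] := leP 0 b.
  by exists (acos a); rewrite /expi cos_acos sin_acos ger0_norm.
exists (- acos a).
by rewrite /expi cosN sinN cos_acos sin_acos ltr0_norm ?opprK.
Qed.

End Expi.

Section UnitaryTwist.
Variables (R : realType) (d D : nat).
Local Notation C := R[i].

Lemma eigenvalue_unitary_twist (A B : 'I_d -> 'M[C]_D) (v : 'M[C]_D) e :
  eigenvalue (\sum_j A j *t conjmxC (A j)) 1 -> unitary v ->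
  (forall j, B j = e *: (v *m A j *m dagger v)) ->
  eigenvalue (\sum_j B j *t conjmxC (A j)) e.
Proof.
move=> /eigenvalue_sum_tens_conj [X X0 fixX] /mulmx1C vv Bv.
apply/eigenvalue_sum_tens_conj; exists (v *m X).
  by apply: contraNneq X0 => vX0; rewrite -[X]mul1mx -vv -mulmxA vX0 mulmx0.
rewrite conjC1 scale1r in fixX; rewrite -{2}fixX mulmx_sumr scaler_sumr.
apply: eq_bigr => j _; rewrite Bv daggerZ !daggerM daggerK -!scalemxAl.
by rewrite !mulmxA -[_ *m dagger v *m v]mulmxA vv mulmx1.
Qed.

Lemma unimodular_eigenvalue_unitary_twist (A B : 'I_d -> 'M[C]_D) rho l :
  psd rho -> rho \in unitmx -> \sum_j A j *m rho *m dagger (A j) = rho ->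
  (forall X, \sum_j dagger (A j) *m X *m A j = X -> exists c : C, X = c%:M) ->
  left_canonical B -> eigenvalue (\sum_j B j *t conjmxC (A j)) l -> `|l| = 1 ->
  exists2 v : 'M[C]_D, unitary v & forall j, B j = l *: (v *m A j *m dagger v).
Proof.
move=> psd_rho rho_unit rho_fixed scalar_fixed B_canonical.
move=> /eigenvalue_sum_tens_conj [X X0 eigX] l1.
have ll : l * l^* = 1 by rewrite -normCK l1 expr1n.
have ll' : l^* * l^*^* = 1 by rewrite conjCK mulrC.
have XA := unimodular_eigen_intertwines psd_rho rho_fixed B_canonical rho_unit
  ll' eigX.
have BX j : B j *m X = l *: (X *m A j) by rewrite XA scalerA ll scale1r.
have [c XX] : exists c : C, dagger X *m X = c%:M.
  apply: scalar_fixed; rewrite -[in RHS](mulmx1 (dagger X)) -B_canonical.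
  rewrite mulmx_sumr mulmx_suml; apply: eq_bigr => j _.
  have -> : dagger X *m (dagger (B j) *m B j) *m X =
            dagger (B j *m X) *m (B j *m X) by rewrite daggerM !mulmxA.
  rewrite BX daggerZ -scalemxAl -scalemxAr scalerA mulrC ll scale1r.
  by rewrite daggerM !mulmxA.
have [s s0 v_unitary] := scalar_gram_unitary X0 XX.
exists (s^-1 *: X) => // j.
rewrite -[B j]mulmx1 -v_unitary mulmxA -scalemxAr BX scalerA mulrC -scalerA.
by rewrite -!scalemxAl.
Qed.

End UnitaryTwist.

Theorem lemma2 (R : realType) (d D : nat) (A : 'I_d -> 'M[R[i]]_D)
    (u : 'M[R[i]]_d) :
  left_canonical A -> injective_mps A -> unitary u ->
  (exists l : R[i], eigenvalue (transfer_u A u) l /\ `|l| = 1) <->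
  (exists (v : 'M[R[i]]_D) (theta : R), unitary v /\
     forall j : 'I_d,
       \sum_(k < d) u j k *: A k = expi theta *: (v *m A j *m dagger v)).
Proof.
move=> A_canonical [transfer1 scalar_fixed _ [rho [[psd_rho _] rho_unit
  rho_fixed _]]] u_unitary.
set B := fun j => \sum_(k < d) u j k *: A k.
have -> : transfer_u A u = \sum_j B j *t conjmxC (A j).
  by apply: eq_bigr => j _; rewrite tensmx_sumZl.
split=> [[l [eig_l l1]] | [v [theta [v_unitary Bv]]]].
- have [v v_unitary Bv] := unimodular_eigenvalue_unitary_twist psd_rho rho_unit
    rho_fixed scalar_fixed (left_canonical_mix A_canonical u_unitary) eig_l l1.
  have [theta theta_l] := unimodular_expi l1.
  by exists v, theta; rewrite theta_l.
- exists (expi theta); split; last exact: norm_expi.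
  exact: eigenvalue_unitary_twist transfer1 v_unitary Bv.
Qed.
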